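(* Fix $r\ge1$. For $K>r$ and $\theta>0$, let $V_1,\dots,V_{K-1}$ be independent with $V_i\sim\mathrm{Beta}(\frac{\theta}{K}+1,(K-i)\frac{\theta}{K})$, and set $Y_1^K=V_1$, $Y_i^K=(1-V_1)\cdots(1-V_{i-1})V_i$ for $2\le i\le K-1$. For fixed $K$, as $\theta\to\infty$ the laws of $(Y_1^K,\dots,Y_r^K)$ satisfy an LDP on $\Delta_r=\{(y_1,\dots,y_r): y_k\ge0,\ \sum_k y_k\le1\}$ with speed $\theta$ and some rate function $J_r^K$. Likewise, with $X_1=U_1$, $X_n=(1-U_1)\cdots(1-U_{n-1})U_n$ for i.i.d. $U_k\sim\mathrm{Beta}(1,\theta)$, the laws of $(X_1,\dots,X_r)$ satisfy an LDP on $\Delta_r$ with speed $\theta$ and rate function $S_r(x_1,\dots,x_r)=\log\frac{1}{1-\sum_{k=1}^r x_k}$ if $\sum_{k=1}^r x_k<1$ and $\infty$ otherwise. Then the rate functions $J_r^K$ do not converge to $S_r$ as $K\to\infty$; that is, there is a point $\mathbf x\in\Delta_r$ with $\lim_{K\to\infty}J_r^K(\mathbf x)\neq S_r(\mathbf x)$.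
   Context: $(Y_1^K,\dots,Y_{K-1}^K)$ is the size-biased sampling of a symmetric $\mathrm{Dirichlet}(\theta/K,\dots,\theta/K)$ distribution; $(X_1,X_2,\dots)$ is the GEM representation. An LDP with speed $\theta$ refers to normalization $\theta^{-1}\log$ as $\theta\to\infty$. *)

From HB Require Import structures.
From mathcomp Require Import all_boot all_order all_algebra.
From mathcomp Require Import all_classical all_reals all_analysis.
Unset Printing Implicit Defensive.
Import Order.TTheory GRing.Theory Num.Theory.
Import numFieldNormedType.Exports.
Local Open Scope classical_set_scope.
Local Open Scope ring_scope.

Section Defs.
Context {R : realType}.

Definition beta_const (a b : R) : R :=
  fine (\int[lebesgue_measure]_(x in `[0%R, 1%R]) (powR x (a - 1) * powR (1 - x) (b - 1))%:E)%E.

Definition beta_density (a b : R) (x : R) : R :=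
  powR x (a - 1) * powR (1 - x) (b - 1) / beta_const a b.

Definition has_beta_law {d} {T : measurableType d} (P : probability T R)
  (X : T -> R) (a b : R) : Prop :=
  forall A : set R, measurable A ->
    P (X @^-1` A) =
    (\int[lebesgue_measure]_(x in A `&` `[0%R, 1%R]) (beta_density a b x)%:E)%E.

(* mutual independence of a finite family of real random variables:
   product rule for all families of Borel sets (taking B i = setT recovers
   every subfamily). *)
Definition mutually_independent {d} {T : measurableType d} (P : probability T R)
  {n : nat} (X : 'I_n -> T -> R) : Prop :=
  (forall i, measurable_fun setT (X i)) /\
  forall B : 'I_n -> set R, (forall i, measurable (B i)) ->
    P (\bigcap_(i in [set: 'I_n]) (X i @^-1` B i)) =
    (\prod_(i < n) P (X i @^-1` B i))%E.

(* stick breaking: Y_j = V_j * prod_{l<j} (1 - V_l)  (0-based indices) *)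
Definition stick {T} (V : nat -> T -> R) (j : nat) (w : T) : R :=
  V j w * \prod_(l < j) (1 - V l w).

Definition stick_vec {T} (r : nat) (V : nat -> T -> R) (w : T) : 'rV[R]_r :=
  \row_(j < r) stick V j w.

(* mu is the law of (Y_1^K,...,Y_r^K) with parameter theta:
   V_1,...,V_{K-1} independent, V_i ~ Beta(theta/K + 1, (K-i) theta/K)
   (paper index i = j+1 for the 0-based index j used here). *)
Definition is_law_Y (K r : nat) (theta : R) (mu : set 'rV[R]_r -> \bar R) : Prop :=
  exists (d : measure_display) (T : measurableType d) (P : probability T R)
         (V : nat -> T -> R),
    mutually_independent P (fun i : 'I_K.-1 => V i) /\
    (forall j, (j < K.-1)%N ->
       has_beta_law P (V j) (theta / K%:R + 1) ((K - j.+1)%:R * theta / K%:R)) /\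
    (forall A, mu A = P (stick_vec r V @^-1` A)).

Definition simplex (r : nat) : set 'rV[R]_r :=
  [set y | (forall i, 0 <= y ord0 i) /\ \sum_(i < r) y ord0 i <= 1].

Definition S_rate {r : nat} (x : 'rV[R]_r) : \bar R :=
  if \sum_(i < r) x ord0 i < 1 then (ln ((1 - \sum_(i < r) x ord0 i)^-1))%:E
  else +oo%E.

Definition scaled_log {r : nat} (mu : R -> set 'rV[R]_r -> \bar R)
  (A : set 'rV[R]_r) (theta : R) : \bar R :=
  ((theta^-1)%:E * lne (mu theta A))%E.

(* LDP on the (closed) subspace D of R^r, speed theta -> +oo, rate function I
   (nonnegative, lower semicontinuous on D, i.e. closed level sets in D).
   Closed (resp. open) subsets of D are F `&` D with F closed (resp. open). *)
Definition LDP_on {r : nat} (D : set 'rV[R]_r) (mu : R -> set 'rV[R]_r -> \bar R)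
  (I : 'rV[R]_r -> \bar R) : Prop :=
  [/\ (forall x, D x -> (0 <= I x)%E),
      (forall a : R, closed (D `&` [set x | (I x <= a%:E)%E])),
      (forall F, closed F ->
         (limf_esup (scaled_log mu (F `&` D)) (pinfty_nbhs R)
            <= - ereal_inf (I @` (F `&` D)))%E) &
      (forall G, open G ->
         (- ereal_inf (I @` (G `&` D))
            <= limf_einf (scaled_log mu (G `&` D)) (pinfty_nbhs R))%E)].

End Defs.

From HB Require Import structures.
From mathcomp Require Import all_boot all_order all_algebra.
From mathcomp Require Import all_classical all_reals all_analysis.
From mathcomp Require Import measurable_realfun ring lra.
Import Order.TTheory GRing.Theory Num.Theory.
Import numFieldNormedType.Exports.
Local Open Scope classical_set_scope.
Local Open Scope ring_scope.

(* At the origin S_r vanishes, whereas every J_r^K is at least 1 there.  The first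
   coordinate Y_1^K = V_1 has law Beta(a, b) with a = theta/K + 1, b = (K-1) theta/K;
   its density is at most eps^(a-1) / B(a, b) on [0, eps] and B(a, b) >= 4^-a 2^-(b-1),
   so for eps = eps_K := exp (-K (1 + ln 2) - 2 ln 2) one gets
   P(Y_1^K < eps_K) <= e^-theta once theta >= 2.  The LDP lower bound on the open set {y_1 < eps_K}, which contains
   the origin, then gives J_r^K(0) >= 1.  To use the hypothesis on J_r^K, the laws of
   (Y_1^K, ..., Y_r^K) are realised on a finite product of Beta laws with real
   parameters, whose normalising constants are shown to be finite and positive. *)

Section powR_bounds.
Context {R : realType}.

Lemma powR_le1 (y p : R) : 0 <= y <= 1 -> 0 <= p -> y `^ p <= 1.
Proof.
move=> /andP[y0 y1] p0.
suff : y `^ p <= 1 `^ p by rewrite powR1.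
by rewrite ge0_ler_powR ?nnegrE.
Qed.

Lemma le0_ger_powR (p y z : R) : p <= 0 -> 0 < y -> y <= z -> z `^ p <= y `^ p.
Proof.
move=> p0 y0 yz; have z0 : 0 < z by exact: lt_le_trans yz.
by rewrite /powR !gt_eqF// ler_expR ler_wnM2l// ler_ln.
Qed.

End powR_bounds.

Section dyadic_blocks.
Context {R : realType}.

Definition dyadic_block (k : nat) : set R :=
  [set` `[1 - 2^-1 ^+ k, 1 - 2^-1 ^+ k.+1[].

Let half_ge0 : 0 <= 2^-1 :> R. Proof. by rewrite invr_ge0 ler0n. Qed.
Let half_le1 : 2^-1 <= 1 :> R. Proof. by rewrite invf_le1 ?ler1n. Qed.

Lemma bigcup_dyadic_block : \bigcup_k dyadic_block k = `[0, 1[%classic.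
Proof.
apply/seteqP; split => x /=.
  move=> [k _]; rewrite /dyadic_block /= !in_itv /= => /andP[h1 h2].
  rewrite (le_trans _ h1) ?subr_ge0 ?exprn_ile1//=.
  by rewrite (lt_le_trans h2)// lerBlDr lerDl exprn_ge0.
rewrite in_itv /= => /andP[x0 x1].
have ex : exists N, 2^-1 ^+ N.+1 < 1 - x.
  have /cvgr_dist_lt/(_ (1 - x)) : GRing.exp (2^-1 : R) @ \oo --> 0.
    by apply: cvg_expr; rewrite ger0_norm// invf_lt1// ltr1n.
  rewrite subr_gt0 => /(_ x1)[N _ HN]; exists N.
  by have := HN N.+1 (leqnSn N); rewrite sub0r normrN ger0_norm ?exprn_ge0.
case: (ex_minnP ex) => m Pm minm.
exists m => //; rewrite /dyadic_block /= in_itv /=; apply/andP; split.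
  case: m Pm minm => [|m] _ minm; first by rewrite expr0 subrr.
  by rewrite lerBlDr -lerBlDl leNgt; apply/negP => /minm; rewrite ltnn.
by rewrite ltrBrDr -ltrBrDl.
Qed.

Lemma trivIset_dyadic_block : trivIset setT dyadic_block.
Proof.
apply/trivIsetP => i j _ _ ij.
wlog lij : i j ij / (i < j)%N.
  move=> H; case: (ltngtP i j) => [l|l|e]; first exact: H.
    by rewrite setIC; apply: H => //; rewrite eq_sym.
  by rewrite e eqxx in ij.
apply/seteqP; split => x //=; rewrite /dyadic_block /= !in_itv /=.
move=> [/andP[_ h1] /andP[h2 _]].
have : 1 - 2^-1 ^+ i.+1 <= 1 - 2^-1 ^+ j :> R by rewrite lerB// ler_wiXn2l.
by move=> /(lt_le_trans h1)/lt_le_trans/(_ h2); rewrite ltxx.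
Qed.

End dyadic_blocks.

Section onemX_powR_integral.
Context {R : realType}.
Local Notation mu := (@lebesgue_measure R).

Lemma nneseries_geometric_lty (rho : R) : 0 <= rho < 1 ->
  (\sum_(i <oo) (rho ^+ i.+1)%:E < +oo)%E.
Proof.
move=> /andP[r0 r1].
suff -> : (\sum_(i <oo) (rho ^+ i.+1)%:E = (rho / (1 - rho))%:E)%E by rewrite ltry.
apply/cvg_lim => //; apply: cvg_EFin; first by apply: nearW => n; rewrite sumEFin.
rewrite [X in X @ _ --> _](_ : _ = series (geometric rho rho)).
  by apply: cvg_geometric_series; rewrite ger0_norm.
apply/funext => n /=; rewrite sumEFin /series /=.
by apply: eq_bigr => i _; rewrite exprSr mulrC.
Qed.

Lemma measurable_onemX_powR (c : R) :
  measurable_fun setT (fun x : R => (1 - x) `^ c).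
Proof. exact: (measurableT_comp (measurable_powR _) (measurable_funB _ _)). Qed.

Lemma integral_onemX_powR_lty (c : R) : -1 < c -> c <= 0 ->
  (\int[mu]_(x in `[0%R, 1%R[) ((1 - x) `^ c)%:E < +oo)%E.
Proof.
move=> c1 c0.
have mf : measurable_fun setT (EFin \o (fun x : R => (1 - x) `^ c)).
  by apply/measurable_EFinP; exact: measurable_onemX_powR.
rewrite -bigcup_dyadic_block ge0_integral_bigcup//; last 4 first.
- by move=> k; exact: measurable_itv.
- exact: measurable_funTS.
- by move=> x _; rewrite lee_fin powR_ge0.
- exact: trivIset_dyadic_block.
set q := 2^-1 `^ c : R; set rho := q / 2.
have rhoE : rho = 2^-1 `^ (c + 1).
  by rewrite powRD ?invr_eq0 ?pnatr_eq0 ?implybT// powRr1 ?invr_ge0.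
have rho01 : 0 <= rho < 1.
  rewrite rhoE powR_ge0 /=.
  suff : 2^-1 `^ (c + 1) < 1 `^ (c + 1) by rewrite powR1.
  by rewrite gt0_ltr_powR ?nnegrE ?invr_ge0 ?invf_lt1 ?ltr1n// -ltrBlDr sub0r.
apply: (le_lt_trans _ (nneseries_geometric_lty _ rho01)).
apply: lee_nneseries => [i _ _|i _].
  by apply: integral_ge0 => x _; rewrite lee_fin powR_ge0.
(* on the [i]-th block, [1 - x] exceeds [2^-(i+1)], and the block has that length *)
apply: (@le_trans _ _ (\int[mu]_(x in dyadic_block i) (q ^+ i.+1)%:E)%E).
  apply: ge0_le_integral => //; first exact: measurable_itv.
  - by move=> x _; rewrite lee_fin powR_ge0.
  - exact: measurable_funTS.
  - move=> x; rewrite /dyadic_block /= in_itv /= => /andP[_ h].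
    rewrite lee_fin /q -[in leRHS]powR_mulrn ?powR_ge0// powRAC powR_mulrn ?invr_ge0//.
    by rewrite le0_ger_powR ?exprn_gt0// ltW// ltrBrDl -ltrBrDr.
rewrite integral_cst; last exact: measurable_itv.
rewrite /dyadic_block /= lebesgue_measure_itv /= lte_fin ltrD2l ltrN2.
rewrite ltr_iXn2l ?invf_lt1 ?ltr1n//.
rewrite ltnSn -EFinD -EFinM lee_fin /rho exprMn.
suff -> : 1 - 2^-1 ^+ i.+1 + - (1 - 2^-1 ^+ i) = 2^-1 ^+ i.+1 :> R by [].
by rewrite exprS; lra.
Qed.

End onemX_powR_integral.

Section beta_kernel.
Context {R : realType}.
Local Notation mu := (@lebesgue_measure R).

Definition beta_kernel (a b x : R) : R := x `^ (a - 1) * (1 - x) `^ (b - 1).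

Lemma measurable_beta_kernel (a b : R) : measurable_fun setT (beta_kernel a b).
Proof.
apply: measurable_funM; first exact: measurable_powR.
exact: measurable_onemX_powR.
Qed.

Lemma beta_kernel_ge0 (a b x : R) : 0 <= beta_kernel a b x.
Proof. by rewrite mulr_ge0 ?powR_ge0. Qed.

Let measurable_EFin_beta_kernel (a b : R) (D : set R) :
  measurable_fun D (EFin \o beta_kernel a b).
Proof.
by apply/measurable_EFinP; apply: measurable_funTS; exact: measurable_beta_kernel.
Qed.

Lemma beta_kernel_integral_lty (a b : R) : 1 <= a -> 0 < b ->
  (\int[mu]_(x in `[0%R, 1%R]) (beta_kernel a b x)%:E < +oo)%E.
Proof.
move=> a1 b0; set c := Num.min (b - 1) 0.
rewrite -integral_itv_bndo_bndc; last exact: measurable_EFin_beta_kernel.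
apply: (le_lt_trans _ (integral_onemX_powR_lty c _ _)); last 2 first.
- by rewrite /c lt_min ltrN10 andbT; lra.
- by rewrite /c ge_min lexx orbT.
apply: ge0_le_integral => //.
- by move=> x _; rewrite lee_fin beta_kernel_ge0.
- exact: measurable_EFin_beta_kernel.
- by apply/measurable_EFinP; apply: measurable_funTS; exact: measurable_onemX_powR.
move=> x; rewrite /= in_itv /= => /andP[x0 x1]; rewrite lee_fin.
have x1' : 0 < 1 - x <= 1 by apply/andP; split; lra.
apply: (@le_trans _ _ ((1 - x) `^ (b - 1))).
  by rewrite /beta_kernel ler_piMl ?powR_ge0// powR_le1 ?subr_ge0// x0 ltW.
have cb : c <= b - 1 by rewrite /c ge_min lexx.
exact: (ger_powR x1' cb).
Qed.

Lemma beta_kernel_integral_ge (a b m : R) : 1 <= a -> 0 <= m ->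
    (forall x, 4^-1 <= x <= 2^-1 -> m <= (1 - x) `^ (b - 1)) ->
  ((4^-1 * 4^-1 `^ (a - 1) * m)%:E <=
     \int[mu]_(x in `[0%R, 1%R]) (beta_kernel a b x)%:E)%E.
Proof.
move=> a1 m0 hm.
have q0 : 0 < 4^-1 :> R by rewrite invr_gt0 ltr0n.
have q1 : 4^-1 < 2^-1 :> R by rewrite ltf_pV2 ?posrE ?ltr0n// ltr_nat.
apply: (@le_trans _ _
    (\int[mu]_(x in `[4^-1%R, 2^-1%R]) (beta_kernel a b x)%:E)%E); last first.
  apply: ge0_subset_integral => //.
  - exact: measurable_EFin_beta_kernel.
  - by move=> x _; rewrite lee_fin beta_kernel_ge0.
  move=> x; rewrite /= !in_itv /= => /andP[x1 x2].
  by rewrite (le_trans (ltW q0) x1) (le_trans x2)// invf_le1 ?ler1n.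
apply: (@le_trans _ _
    (\int[mu]_(x in `[4^-1%R, 2^-1%R]) (4^-1 `^ (a - 1) * m)%:E)%E).
  rewrite integral_cst //= lebesgue_measure_itv /= lte_fin q1 -EFinD -EFinM lee_fin.
  by rewrite -mulrA mulrC ler_wpM2l ?mulr_ge0 ?powR_ge0//; lra.
apply: ge0_le_integral => //.
- by move=> x _; rewrite lee_fin mulr_ge0 ?powR_ge0.
- exact: measurable_EFin_beta_kernel.
move=> x; rewrite /= in_itv /= => /andP[x1 x2].
rewrite lee_fin ler_pM ?powR_ge0 ?hm ?x1//.
by rewrite ge0_ler_powR ?nnegrE ?subr_ge0// ltW// (lt_le_trans q0).
Qed.

Lemma beta_kernel_integral_gt0 (a b : R) : 1 <= a ->
  (0 < \int[mu]_(x in `[0%R, 1%R]) (beta_kernel a b x)%:E)%E.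
Proof.
move=> a1; set m := Num.min (2^-1 `^ (b - 1)) 1.
have m0 : 0 < m by rewrite /m lt_min ltr01 andbT powR_gt0// invr_gt0 ltr0n.
apply: (lt_le_trans _ (beta_kernel_integral_ge a b m a1 (ltW m0) _)).
  by rewrite lte_fin !mulr_gt0 ?invr_gt0 ?ltr0n ?powR_gt0 ?invr_gt0 ?ltr0n.
move=> x /andP[x1 x2]; have x1' : 0 < 1 - x <= 1 by apply/andP; split; lra.
have [b1|b1] := leP 0 (b - 1).
  by rewrite ge_min ge0_ler_powR ?nnegrE//; lra.
by rewrite ge_min; apply/orP; right; have := ger_powR x1' (ltW b1); rewrite powRr0.
Qed.

Lemma beta_constE (a b : R) : 1 <= a -> 0 < b ->
  (\int[mu]_(x in `[0%R, 1%R]) (beta_kernel a b x)%:E)%E = (beta_const a b)%:E.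
Proof.
move=> a1 b0; rewrite /beta_const fineK// ge0_fin_numE ?beta_kernel_integral_lty//.
by apply: integral_ge0 => x _; rewrite lee_fin beta_kernel_ge0.
Qed.

Lemma beta_const_gt0 (a b : R) : 1 <= a -> 0 < b -> 0 < beta_const a b.
Proof. by move=> a1 b0; rewrite -lte_fin -beta_constE// beta_kernel_integral_gt0. Qed.

Lemma beta_const_ge (a b : R) : 1 <= a -> 1 <= b ->
  4^-1 * 4^-1 `^ (a - 1) * 2^-1 `^ (b - 1) <= beta_const a b.
Proof.
move=> a1 b1; rewrite -lee_fin -beta_constE//; last by rewrite (lt_le_trans ltr01).
apply: beta_kernel_integral_ge => //.
move=> x /andP[x1 x2]; rewrite ge0_ler_powR ?nnegrE ?subr_ge0//; lra.
Qed.

End beta_kernel.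

Section beta_law.
Context {R : realType}.
Local Notation mu := (@lebesgue_measure R).
Variables a b : R.

(* The parameters are clamped to [1 <= a] and [0 < b], so that [beta_law a b]
   is a probability for all [a], [b]; it is Beta(a, b) when they are in range. *)
Let a' := Num.max a 1.
Let b' := if 0 < b then b else 1.

Definition beta_law (A : set R) : \bar R :=
  (\int[mu]_(x in A `&` `[0%R, 1%R]) (beta_density a' b' x)%:E)%E.

Let a'_ge1 : 1 <= a'. Proof. by rewrite le_max lexx orbT. Qed.
Let b'_gt0 : 0 < b'. Proof. by rewrite /b'; case: ifP. Qed.

Let beta_density_ge0 x : 0 <= beta_density a' b' x.
Proof. by rewrite divr_ge0 ?beta_kernel_ge0// ltW// beta_const_gt0. Qed.

Let measurable_beta_density : measurable_fun setT (beta_density a' b').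
Proof.
by apply: measurable_funM; [exact: measurable_beta_kernel|exact: measurable_cst].
Qed.

Let beta_law0 : beta_law set0 = 0%E.
Proof. by rewrite /beta_law set0I integral_set0. Qed.

Let beta_law_ge0 A : (0 <= beta_law A)%E.
Proof. by apply: integral_ge0 => x _; rewrite lee_fin. Qed.

Let beta_law_sigma_additive : semi_sigma_additive beta_law.
Proof.
move=> /= F mF tF mUF; rewrite /beta_law; apply: cvg_toP.
  apply: ereal_nondecreasing_is_cvgn => m n mn.
  apply: lee_sum_nneg_natr => // k _ _.
  by apply: integral_ge0 => x _; rewrite lee_fin.
rewrite setI_bigcupl ge0_integral_bigcup//=.
- by move=> k; apply: measurableI; [exact: mF|exact: measurable_itv].
- by apply/measurable_EFinP; apply: measurable_funTS; exact: measurable_beta_density.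
- by move=> x _; rewrite lee_fin.
- apply/trivIsetP => i j _ _ ij.
  by move/trivIsetP : tF => /(_ i j I I ij) Fij; rewrite setIACA Fij set0I.
Qed.

HB.instance Definition _ := isMeasure.Build _ _ _ beta_law
  beta_law0 beta_law_ge0 beta_law_sigma_additive.

Let beta_law_setT : beta_law setT = 1%E.
Proof.
rewrite /beta_law setTI.
under eq_integral do rewrite /beta_density EFinM.
rewrite ge0_integralZr//; last 3 first.
- by apply/measurable_EFinP; apply: measurable_funTS; exact: measurable_beta_kernel.
- by move=> x _; rewrite lee_fin beta_kernel_ge0.
- by rewrite lee_fin invr_ge0 ltW// beta_const_gt0.
by rewrite [X in (X * _)%E]beta_constE// -EFinM mulfV// gt_eqF// beta_const_gt0.
Qed.

HB.instance Definition _ :=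
  @Measure_isProbability.Build _ _ R beta_law beta_law_setT.

Lemma beta_lawE (A : set R) : 1 <= a -> 0 < b ->
  beta_law A = (\int[mu]_(x in A `&` `[0%R, 1%R]) (beta_density a b x)%:E)%E.
Proof. by move=> a1 b0; rewrite /beta_law /a' /b' b0 (max_l a1). Qed.

Lemma beta_law_itvNy_le (eps : R) : 1 <= a -> 1 <= b -> 0 < eps <= 1 ->
  (beta_law `]-oo, eps[ <= (eps `^ (a - 1) * eps / beta_const a b)%:E)%E.
Proof.
move=> a1 b1 /andP[e0 e1]; have b0 : 0 < b by rewrite (lt_le_trans ltr01).
have B0 := beta_const_gt0 a b a1 b0; set S := `]-oo, eps[ `&` `[0%R, 1%R].
have mS : measurable S by apply: measurableI; exact: measurable_itv.
apply: (@le_trans _ _ ((eps `^ (a - 1) / beta_const a b)%:E * mu S)%E).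
  rewrite beta_lawE// -integral_cst//; apply: ge0_le_integral => //.
  - by move=> x _; rewrite lee_fin divr_ge0 ?beta_kernel_ge0// ltW.
  - apply/measurable_EFinP; apply: measurable_funTS.
    by apply: measurable_funM; [exact: measurable_beta_kernel|exact: measurable_cst].
  move=> x [/=]; rewrite !in_itv /= => xe /andP[x0 x1].
  rewrite lee_fin ler_pM2r ?invr_gt0// -[leRHS]mulr1 ler_pM ?powR_ge0//.
    by rewrite ge0_ler_powR ?nnegrE ?subr_ge0// ltW.
  by rewrite powR_le1 ?subr_ge0 ?x0//; lra.
rewrite mulrAC [leRHS]EFinM; apply: lee_wpmul2l.
  by rewrite lee_fin divr_ge0 ?powR_ge0// ltW.
apply: (@le_trans _ _ (mu `[0%R, eps])).
  apply: le_measure; rewrite ?inE//.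
  by move=> x [/=]; rewrite !in_itv /= => xe /andP[x0 _]; rewrite x0 ltW.
by rewrite lebesgue_measure_itv /= lte_fin e0 -EFinD subr0.
Qed.

End beta_law.

Section stick_eps.
Context {R : realType}.

(* Chosen so that [a ln eps_K <= - theta + ln (4^-a 2^-(b-1))] for the parameters
   [a = theta/K + 1], [b = (K-1) theta/K] of [V_1]; see [stick_eps_ratio_le]. *)
Definition stick_eps (K : nat) : R := expR (- (K%:R * (1 + ln 2) + 2 * ln 2)).

Lemma stick_eps_gt0 (K : nat) : 0 < stick_eps K.
Proof. exact: expR_gt0. Qed.

Lemma stick_eps_le1 (K : nat) : stick_eps K <= 1.
Proof. by rewrite expR_le1 oppr_le0 addr_ge0 ?mulr_ge0 ?addr_ge0 ?ln_ge0 ?ler1n. Qed.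

Lemma stick_eps_ratio_le (K : nat) (th a b : R) : (2 <= K)%N -> 2 <= th ->
    a = th / K%:R + 1 -> b = (K - 1)%:R * th / K%:R ->
  stick_eps K `^ (a - 1) * stick_eps K /
    (4^-1 * 4^-1 `^ (a - 1) * 2^-1 `^ (b - 1)) <= expR (- th).
Proof.
move=> K2 th2 -> ->; set l := ln (2 : R).
have l0 : 0 < l by rewrite ln_gt0 ?ltr1n.
have e2 : 2^-1 = expR (- l) :> R by rewrite expRN lnK ?posrE.
have e4 : 4^-1 = expR (- (2 * l)) :> R.
  by rewrite expRN expRM_natl lnK ?posrE// -natrX.
have K0 : 2 <= K%:R :> R by rewrite ler_nat.
have Kn0 : K%:R != 0 :> R by rewrite gt_eqF// (lt_le_trans _ K0).
have bth : (K - 1)%:R * th / K%:R - 1 <= th.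
  have -> : (K - 1)%:R * th / K%:R = th - th / K%:R.
    by rewrite natrB ?(leq_trans _ K2)//; field.
  have : 0 <= th / K%:R by rewrite divr_ge0 ?ler0n//; lra.
  lra.
rewrite /stick_eps e4 e2 -!expRM -!expRD -expRN -expRD ler_expR -/l addrK.
have h : 0 <= l * (th - ((K - 1)%:R * th / K%:R - 1)).
  by rewrite mulr_ge0 ?subr_ge0// ltW.
have h' : 0 <= K%:R * l by rewrite mulr_ge0 ?ler0n// ltW.
set bb := (K - 1)%:R * th / K%:R - 1 in bth h *.
have -> : - (K%:R * (1 + l) + 2 * l) * (th / K%:R) - (K%:R * (1 + l) + 2 * l) -
    (- (2 * l) + - (2 * l) * (th / K%:R) + - l * bb) =
    - th * (1 + l) - K%:R * (1 + l) + l * bb by field.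
nra.
Qed.

Lemma beta_law_itvNy_stick_eps (K : nat) (th : R) :
    (2 <= K)%N -> 2 <= th ->
  (beta_law (th / K%:R + 1) ((K - 1)%:R * th / K%:R) `]-oo, stick_eps K[
     <= (expR (- th))%:E)%E.
Proof.
move=> K2 th2; set a := th / K%:R + 1; set b := (K - 1)%:R * th / K%:R.
have K0 : 0 < K%:R :> R by rewrite ltr0n (leq_trans _ K2).
have a1 : 1 <= a by rewrite lerDr divr_ge0 ?ler0n//; lra.
have b1 : 1 <= b.
  have K2' : 2 <= K%:R :> R by rewrite ler_nat.
  by rewrite /b ler_pdivlMr// mul1r natrB ?(leq_trans _ K2)//; nra.
have L0 : 0 < 4^-1 * 4^-1 `^ (a - 1) * 2^-1 `^ (b - 1) :> R.
  by rewrite !mulr_gt0 ?powR_gt0 ?invr_gt0 ?ltr0n.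
apply: (le_trans (beta_law_itvNy_le _ _ _ a1 b1 _)).
  by rewrite stick_eps_gt0 stick_eps_le1.
rewrite lee_fin (le_trans _ (stick_eps_ratio_le K th a b K2 th2 erefl erefl))//.
rewrite ler_pM2l ?mulr_gt0 ?powR_gt0 ?stick_eps_gt0// lef_pV2 ?posrE//.
  exact: beta_const_ge.
by rewrite beta_const_gt0// (lt_le_trans ltr01).
Qed.

End stick_eps.

Lemma measurable_preimageT {d d'} {T : measurableType d} {U : measurableType d'}
    (f : T -> U) (B : set U) :
  measurable_fun setT f -> measurable B -> measurable (f @^-1` B).
Proof. by move=> mf mB; rewrite -[X in measurable X]setTI; exact: mf. Qed.

Section finite_product.
Context {R : realType}.
Variable P : nat -> probability R R.

(* [prod_space n] is R^(n+1) as the nested pairs (((x_0, x_1), x_2), ..., x_n). *)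
Fixpoint prod_space_pack (n : nat) : {d : measure_display & measurableType d} :=
  match n with
  | 0 => existT _ _ (R : measurableType _)
  | n.+1 => existT _ _ ((projT2 (prod_space_pack n)) * R : measurableType _)%type
  end.

Definition prod_space (n : nat) := projT2 (prod_space_pack n).

Fixpoint prod_prob (n : nat) : probability (prod_space n) R :=
  match n as n return probability (prod_space n) R with
  | 0 => P 0
  | n.+1 => ((prod_prob n) \x (P n.+1))%E : probability _ R
  end.

Fixpoint coord (n : nat) : nat -> prod_space n -> R :=
  match n as n return nat -> prod_space n -> R with
  | 0 => fun _ x => x
  | n.+1 => fun i p => if i == n.+1 then p.2 else coord n i p.1
  end.

Definition prod_box (n : nat) (B : nat -> set R) : set (prod_space n) :=
  [set p | forall i, (i <= n)%N -> B i (coord n i p)].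

Lemma measurable_coord (n i : nat) : measurable_fun setT (coord n i).
Proof.
elim: n => [|n IH] /=; first exact: measurable_id.
case: (i == n.+1); first exact: measurable_snd.
exact: measurableT_comp IH measurable_fst.
Qed.

Lemma measurable_prod_box (n : nat) (B : nat -> set R) :
  (forall i, measurable (B i)) -> measurable (prod_box n B).
Proof.
move=> mB.
have -> : prod_box n B =
    \bigcap_i (coord n i @^-1` (if (i <= n)%N then B i else setT)).
  apply/seteqP; split => p /=; first by move=> H i _ /=; case: ifP => // /H.
  by move=> H i lin; have := H i I; rewrite /= lin.
apply: bigcapT_measurable => i.
by apply: measurable_preimageT; [exact: measurable_coord|case: ifP].
Qed.

Lemma prod_prob_box (n : nat) (B : nat -> set R) : (forall i, measurable (B i)) ->
  prod_prob n (prod_box n B) = (\prod_(i < n.+1) P i (B i))%E.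
Proof.
move=> mB; elim: n => [|n IH].
  rewrite big_ord1 /=; congr (P 0 _); apply/seteqP; split => x /=.
    by move/(_ 0%N (leqnn 0)).
  by move=> Bx [|i].
rewrite big_ord_recr /= -IH.
have -> : prod_box n.+1 B = prod_box n B `*` B n.+1.
  apply/seteqP; split => -[p x]; rewrite /prod_box /=.
    move=> H; split; last by have := H n.+1 (leqnn _); rewrite eqxx.
    move=> i lin; have := H i (leqW lin).
    by rewrite ltn_eqF ?ltnS.
  move=> [H1 H2] i; rewrite leq_eqVlt; case: eqP => [->//|_] /= lin.
  exact: H1.
by rewrite product_measure1E//; exact: measurable_prod_box.
Qed.

Lemma prod_prob_coord (n j : nat) (A : set R) : (j <= n)%N -> measurable A ->
  prod_prob n (coord n j @^-1` A) = P j A.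
Proof.
move=> jn mA; pose B i := if i == j then A else setT.
have mB i : measurable (B i) by rewrite /B; case: ifP.
have -> : coord n j @^-1` A = prod_box n B.
  apply/seteqP; split => p /=.
    by move=> Ap i _; rewrite /B; case: eqP => [->|].
  by move/(_ j jn); rewrite /B eqxx.
rewrite prod_prob_box// (bigD1 (Ordinal (jn : (j < n.+1)%N)))//= /B eqxx.
rewrite big1 ?mule1//.
by move=> i /negbTE; rewrite -val_eqE /= => ->; exact: probability_setT.
Qed.

Lemma mutually_independent_coord (n : nat) :
  mutually_independent (prod_prob n) (fun i : 'I_n.+1 => coord n i).
Proof.
split => [i|B mB]; first exact: measurable_coord.
pose B' k := if (k < n.+1)%N then B (inord k) else setT.
have mB' k : measurable (B' k) by rewrite /B'; case: ifP.
have -> : \bigcap_(i in [set: 'I_n.+1]) (coord n i @^-1` B i) = prod_box n B'.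
  apply/seteqP; split => p /=.
    move=> H i lin; rewrite /B' ltnS lin.
    by have := H (inord i) I; rewrite /= inordK.
  by move=> H i _ /=; have := H i (ltn_ord i); rewrite /B' ltn_ord inord_val.
rewrite prod_prob_box//; apply: eq_bigr => i _.
have iln : (i <= n)%N by rewrite -ltnS.
by rewrite prod_prob_coord// /B' ltn_ord inord_val.
Qed.

End finite_product.

Section stick_breaking.
Context {R : realType} {d : measure_display} {T : measurableType d}.
Variable V : nat -> T -> R.
Hypothesis mV : forall j, measurable_fun setT (V j).

Lemma measurable_stick (k : nat) : measurable_fun setT (stick V k).
Proof.
apply: measurable_funM => //; apply: measurable_prod => l _.
exact: measurable_funB.
Qed.

Lemma measurable_stick_vec_preimage_simplex (r : nat) :
  measurable (stick_vec r V @^-1` simplex r).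
Proof.
have -> : stick_vec r V @^-1` simplex r =
    \bigcap_(k in [set k | (k < r)%N]) (stick V k @^-1` `[0%R, +oo[%classic) `&`
    (fun w => \sum_(i < r) stick V i w) @^-1` `]-oo, 1%R]%classic.
  have svE w i : stick_vec r V w ord0 i = stick V i w by rewrite mxE.
  apply/seteqP; split => w; rewrite /simplex /=.
    move=> [nn s1]; split.
      by move=> k /= kr; rewrite in_itv /= andbT -(svE w (Ordinal kr)).
    by rewrite in_itv /=; under eq_bigr do rewrite -svE.
  move=> [nn]; rewrite in_itv /= => s1.
  split; last by under eq_bigr do rewrite svE.
  by move=> i; rewrite svE; have := nn i (ltn_ord i); rewrite /= in_itv /= andbT.
apply: measurableI.
  apply: bigcap_measurableType => k _.
  exact: measurable_preimageT (measurable_stick k) (measurable_itv _).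
apply: measurable_preimageT (measurable_itv _).
by apply: measurable_sum => i; exact: measurable_stick.
Qed.

End stick_breaking.

Section stick_law.
Context {R : realType}.
Variables n r : nat.
Local Notation K := n.+2.

Definition stick_beta (th : R) (j : nat) : probability R R :=
  beta_law (th / K%:R + 1) ((K - j.+1)%:R * th / K%:R).

Definition stick_law (th : R) (A : set 'rV[R]_r) : \bar R :=
  prod_prob (stick_beta th) n (stick_vec r (coord n) @^-1` A).

Lemma stick_law_is_law_Y (th : R) : 0 < th -> is_law_Y K r th (stick_law th).
Proof.
move=> th0; exists _, (prod_space n), (prod_prob (stick_beta th) n), (coord n).
split; first exact: mutually_independent_coord.
split=> [j jn A mA|//].
have jn' : (j <= n)%N by rewrite -ltnS.
rewrite (prod_prob_coord _ _ _ _ jn' mA); apply: beta_lawE.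
- by rewrite lerDr divr_ge0 ?ler0n// ltW.
- by rewrite !mulr_gt0 ?invr_gt0 ?ltr0n ?subn_gt0.
Qed.

End stick_law.

Lemma simplex0 {R : realType} (r : nat) : simplex r (0 : 'rV[R]_r).
Proof.
split=> [i|]; first by rewrite mxE.
by rewrite big1 ?ler01// => i _; rewrite mxE.
Qed.

Lemma S_rate0 {R : realType} (r : nat) : S_rate (0 : 'rV[R]_r) = 0%E.
Proof. by rewrite /S_rate big1 ?ltr01 ?subr0 ?invr1 ?ln1// => i _; rewrite mxE. Qed.

Lemma LDP_on_rate_ge {R : realType} {r : nat} {D G : set 'rV[R]_r}
    {mu : R -> set 'rV[R]_r -> \bar R} {I : 'rV[R]_r -> \bar R} (c : R) :
    LDP_on D mu I -> open G ->
    (\forall th \near +oo, (0 <= mu th (G `&` D) <= (expR (- (c * th)))%:E)%E) ->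
  (c%:E <= ereal_inf (I @` (G `&` D)))%E.
Proof.
move=> [_ _ _ lower] oG small; rewrite -leeN2.
apply: le_trans (lower G oG) _; rewrite limf_einfE; apply: ge_ereal_sup.
move=> _ [W W_oo <-].
have [th [Wth th0 /andP[mu_ge0 mu_le]]] : exists th, [/\ W th, 0 < th &
    (0 <= mu th (G `&` D) <= (expR (- (c * th)))%:E)%E].
  apply: (@filter_ex _ (pinfty_nbhs R)); near=> th; split; near: th => //.
  exact: nbhs_pinfty_gt.
apply: le_trans (ereal_inf_lbound (imageP _ Wth)) _.
have lne_le : (lne (mu th (G `&` D)) <= (- (c * th))%:E)%E.
  rewrite -[in leRHS](expRK (- (c * th))) -lne_EFin ?expR_gt0// lee_lne//.
    by rewrite in_itv /= mu_ge0 leey.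
  by rewrite in_itv /= lee_fin expR_ge0 leey.
apply: (le_trans (lee_wpmul2l _ lne_le)); first by rewrite lee_fin invr_ge0 ltW.
by rewrite -EFinM mulrN mulrCA mulVf ?gt_eqF ?mulr1.
Unshelve. all: by end_near.
Qed.

Lemma stick_law_rate_ge1 {R : realType} (n r : nat) (hr : (0 < r)%N)
    (J : 'rV[R]_r -> \bar R) :
  LDP_on (simplex r) (stick_law n r) J -> (1 <= J 0%R)%E.
Proof.
move=> ldp; set eps := stick_eps n.+2 : R.
pose G := [set y : 'rV[R]_r | y ord0 (Ordinal hr) < eps].
have oG : open G.
  apply: (@open_comp _ _ (fun y : 'rV[R]_r => y ord0 (Ordinal hr))
    [set x | x < eps]).
    by move=> y _; exact: coord_continuous.
  exact: open_lt.
have G0 : (G `&` simplex r) 0.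
  by split; [rewrite /G /= mxE stick_eps_gt0|exact: simplex0].
apply: le_trans (LDP_on_rate_ge 1 ldp oG _) (ereal_inf_lbound (imageP _ G0)).
have preG : stick_vec r (coord n) @^-1` G = coord n 0 @^-1` `]-oo, eps[%classic.
  by rewrite predeqE => w; rewrite /G /= mxE /stick big_ord0 mulr1 in_itv.
near=> th.
have th2 : 2 <= th by near: th; exact: nbhs_pinfty_ge.
rewrite measure_ge0 /= mul1r /stick_law preimage_setI preG.
apply: (le_trans _ (beta_law_itvNy_stick_eps n.+2 th _ th2)) => //.
apply: (@le_trans _ _
    (prod_prob (stick_beta n th) n (coord n 0 @^-1` `]-oo, eps[))).
  2: by rewrite prod_prob_coord//; exact: lexx.
apply: le_measure; rewrite ?inE; last exact: subIsetl.
- apply: measurableI.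
    exact: measurable_preimageT (measurable_coord _ _) (measurable_itv _).
  apply: measurable_stick_vec_preimage_simplex => j; exact: measurable_coord.
- exact: measurable_preimageT (measurable_coord _ _) (measurable_itv _).
Unshelve. all: by end_near.
Qed.

Theorem theorem2p5 (R : realType) (r : nat) (hr : (1 <= r)%N)
  (J : nat -> 'rV[R]_r -> \bar R) :
  (forall K : nat, (r < K)%N ->
     forall mu : R -> set 'rV[R]_r -> \bar R,
       (forall theta : R, 0 < theta -> is_law_Y K r theta (mu theta)) ->
       LDP_on (simplex r) mu (J K)) ->
  exists2 x : 'rV[R]_r, simplex r x & ~ ((fun K => J K x) @ \oo --> S_rate x).
Proof.
move=> HJ; exists 0; first exact: simplex0.
rewrite S_rate0 => /cvge_to_ge J0ge.
suff : (1 <= 0 :> \bar R)%E by rewrite lee_fin ler10.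
apply: J0ge; exists r.+1 => // -[|[|n]] rK; first by [].
  by have := leq_ltn_trans hr rK.
exact: stick_law_rate_ge1 n r hr _ (HJ _ rK _ (stick_law_is_law_Y n r)).
Qed.
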